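(* Let $\Gamma$ be a group and $\alpha\in\mathrm{End}(\Gamma)$. Then $G(\alpha)\cong G(\varprojlim\alpha)$.
   Context: $\{0,1\}^*$ denotes the set of finite words over $\{0,1\}$ (including the empty word $\epsilon$), and $\mathfrak C=\{0,1\}^{\mathbb N}$ the Cantor space. A finite complete prefix code is a finite set $\{t_1,\dots,t_n\}\subset\{0,1\}^*$ such that every $x\in\mathfrak C$ has exactly one $t_i$ as a prefix. Thompson's group $V$ is the group of homeomorphisms $v$ of $\mathfrak C$ for which there exist finite complete prefix codes $\{t_1,\dots,t_n\}$, $\{s_1,\dots,s_n\}$ and a permutation $\sigma$ with $v(t_iw)=s_{\sigma(i)}w$ for all $i$, $w\in\mathfrak C$. For a group $\Lambda$ and group morphism $\omega:\Lambda\times\Lambda\to\Lambda$, $K(\omega)$ is the group of maps $a:\{0,1\}^*\to\Lambda$ (pointwise product) with $a(u)=\omega(a(u0),a(u1))$ for all $u$; $V$ acts on it by $\pi(v)(a)(s_{\sigma(i)}u)=a(t_iu)$ for all $i$, $u\in\{0,1\}^*$ (this determines $\pi(v)(a)\in K(\omega)$ uniquely), and $G(\omega):=K(\omega)\rtimes V$ with $vav^{-1}=\pi(v)(a)$. For $\beta\in\mathrm{End}(\Lambda)$, $G(\beta):=G(\omega)$ with $\omega(g,h)=\beta(g)$. $\varprojlim\Gamma:=\{(g_n)\in\prod_{\mathbb N}\Gamma: g_n=\alpha(g_{n+1})\ \forall n\}$, and $\varprojlim\alpha:\varprojlim\Gamma\to\varprojlim\Gamma$, $(g_n)\mapsto(\alpha(g_n))$,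 which is an automorphism of $\varprojlim\Gamma$. *)

From mathcomp Require Import all_boot.
From Stdlib Require Import ClassicalEpsilon.
Set Implicit Arguments. Unset Strict Implicit. Unset Printing Implicit Defensive.

Record is_group_law (T : Type) (mul : T -> T -> T) (one : T) (inv : T -> T) : Prop := {
  grp_assoc : forall x y z, mul x (mul y z) = mul (mul x y) z;
  grp_mul1l : forall x, mul one x = x;
  grp_mul1r : forall x, mul x one = x;
  grp_mulVl : forall x, mul (inv x) x = one;
  grp_mulVr : forall x, mul x (inv x) = one }.

Arguments is_group_law {T}.
Definition is_endo (T : Type) (mul : T -> T -> T) (f : T -> T) : Prop :=
  forall x y, f (mul x y) = mul (f x) (f y).

(* words over {0,1}: 0 = false, 1 = true *)
Definition word := seq bool.
Definition cantor := nat -> bool.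

Definition is_prefix (t : word) (x : cantor) : Prop :=
  forall i, i < size t -> x i = nth false t i.

Definition wcat (t : word) (w : cantor) : cantor :=
  fun i => if i < size t then nth false t i else w (i - size t).

Definition complete_prefix_code (n : nat) (t : 'I_n -> word) : Prop :=
  forall x : cantor, exists! i : 'I_n, is_prefix (t i) x.

Definition cantor_continuous (f : cantor -> cantor) : Prop :=
  forall (x : cantor) (N : nat), exists M : nat, forall y : cantor,
    (forall i, i < M -> y i = x i) -> forall i, i < N -> f y i = f x i.

Definition cantor_homeo (f : cantor -> cantor) : Prop :=
  exists g : cantor -> cantor,
    cancel f g /\ cancel g f /\ cantor_continuous f /\ cantor_continuous g.

Arguments complete_prefix_code : clear implicits.
Definition V_rep (v : cantor -> cantor) (n : nat) (t s : 'I_n -> word)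
    (sigma : 'I_n -> 'I_n) : Prop :=
  complete_prefix_code n t /\ complete_prefix_code n s /\ bijective sigma /\
  forall (i : 'I_n) (w : cantor), v (wcat (t i) w) = wcat (s (sigma i)) w.

Arguments V_rep : clear implicits.
(* Thompson's group V, as a set of maps Cantor -> Cantor (group law: composition) *)
Definition inV (v : cantor -> cantor) : Prop :=
  cantor_homeo v /\
  exists n (t s : 'I_n -> word) (sigma : 'I_n -> 'I_n), V_rep v n t s sigma.

Section GOmega.
Variables (L : Type) (inL : L -> Prop) (mulL : L -> L -> L) (omega : L -> L -> L).
(* L together with inL is the group Lambda (a subset of L closed under mulL),
   omega : Lambda x Lambda -> Lambda *)

Definition inK (a : word -> L) : Prop :=
  (forall u, inL (a u)) /\
  forall u : word, a u = omega (a (rcons u false)) (a (rcons u true)).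

(* pi(v)(a): the unique b in K(omega) with b(s_{sigma i} u) = a(t_i u) *)
Definition piV (v : cantor -> cantor) (a : word -> L) : word -> L :=
  epsilon (inhabits a) (fun b => inK b /\
    exists n (t s : 'I_n -> word) (sigma : 'I_n -> 'I_n),
      V_rep v n t s sigma /\
      forall (i : 'I_n) (u : word), b (s (sigma i) ++ u) = a (t i ++ u)).

(* raw elements of K(omega) x| V *)
Definition rawG := ((word -> L) * (cantor -> cantor))%type.

Definition inG (x : rawG) : Prop := inK x.1 /\ inV x.2.

(* (a, v) (b, w) = (a * pi(v)(b), v o w), i.e.  v b v^-1 = pi(v)(b) *)
Definition mulG (x y : rawG) : rawG :=
  (fun u => mulL (x.1 u) (piV x.2 y.1 u), x.2 \o y.2).
End GOmega.

Definition group_iso (A B : Type) (inA : A -> Prop) (mulA : A -> A -> A)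
    (inB : B -> Prop) (mulB : B -> B -> B) : Prop :=
  exists f : A -> B,
    (forall x, inA x -> inB (f x)) /\
    (forall x y, inA x -> inA y -> f x = f y -> x = y) /\
    (forall y, inB y -> exists2 x, inA x & f x = y) /\
    (forall x y, inA x -> inA y -> f (mulA x y) = mulB (f x) (f y)).

Definition omega_of (L : Type) (beta : L -> L) : L -> L -> L := fun g _ => beta g.

Definition in_lim (T : Type) (alpha : T -> T) (g : nat -> T) : Prop :=
  forall n, g n = alpha (g n.+1).
Definition lim_mul (T : Type) (mul : T -> T -> T) (g h : nat -> T) : nat -> T :=
  fun n => mul (g n) (h n).
Definition lim_map (T : Type) (alpha : T -> T) (g : nat -> T) : nat -> T :=
  fun n => alpha (g n).

From mathcomp Require Import all_boot.
From Stdlib Require Import ClassicalEpsilon FunctionalExtensionality.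
Set Implicit Arguments. Unset Strict Implicit.

(* For [a] in K(alpha), the relation a(u) = alpha(a(u0)) makes n |-> a(u0^n) a
   point of the inverse limit, so a |-> (u |-> (a(u0^n))_n) maps K(alpha) to
   K(lim alpha); taking 0-th coordinates inverts it.  The map acts pointwise,
   hence respects pointwise products, and it commutes with the V-actions: the
   relation b(s_{sigma i} u) = a(t_i u) defining pi(v)(a) survives appending
   zeros to u, and it determines b, because for large k every word w 0^k extends
   a code word, so b(w) = alpha^k(b(w 0^k)) is read off a. *)

Definition zeros : cantor := fun _ => false.

Lemma cat_nseqS (T : Type) (u : seq T) x n :
  u ++ nseq n.+1 x = rcons (u ++ nseq n x) x.
Proof. by rewrite -cats1 -catA -addn1 nseqD. Qed.

Lemma wcat_cat p q y : wcat (p ++ q) y = wcat p (wcat q y).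
Proof.
apply: functional_extensionality => i; rewrite /wcat size_cat nth_cat.
case: (ltnP i (size p)) => [ltip | leip]; first by rewrite ltn_addr.
by rewrite ltn_subLR // subnDA.
Qed.

Lemma wcat_rcons_zeros u : wcat (rcons u false) zeros = wcat u zeros.
Proof.
rewrite -cats1 wcat_cat; congr wcat.
by apply: functional_extensionality => -[].
Qed.

Lemma is_prefix_wcat p u y : is_prefix p (wcat (p ++ u) y).
Proof. by move=> i ltip; rewrite /wcat size_cat nth_cat ltip ltn_addr. Qed.

Lemma wcat_injl p q : (forall y, wcat p y = wcat q y) -> p = q.
Proof.
move=> Epq.
have Eat y i : wcat p y i = wcat q y i by rewrite Epq.
have Enth i : i < size p -> i < size q -> nth false p i = nth false q i.
  by move=> ltip ltiq; have := Eat zeros i; rewrite /wcat ltip ltiq.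
case: (ltngtP (size p) (size q)) => [ltpq | ltqp | eqpq].
- have := Eat (fun _ => ~~ nth false q (size p)) (size p).
  by rewrite /wcat ltnn ltpq; case: nth.
- have := Eat (fun _ => ~~ nth false p (size q)) (size q).
  by rewrite /wcat ltnn ltqp; case: nth.
- apply: (eq_from_nth (x0 := false) eqpq) => i ltip.
  by apply: Enth; rewrite -?eqpq.
Qed.

Lemma cat_nseq_prefix p w k : is_prefix p (wcat w zeros) -> size p <= k ->
  w ++ nseq k false = p ++ drop (size p) (w ++ nseq k false).
Proof.
move=> pre_p lepk; rewrite -{1}(cat_take_drop (size p) (w ++ _)); congr (_ ++ _).
have lep : size p <= size (w ++ nseq k false).
  by rewrite size_cat size_nseq (leq_trans lepk (leq_addl _ _)).
apply: (eq_from_nth (x0 := false)); first by rewrite size_takel.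
move=> i; rewrite size_takel // => ltip.
rewrite nth_take // -pre_p // /wcat /zeros nth_cat.
by case: ifP => // _; rewrite nth_nseq; case: ifP.
Qed.

Section PrefixCode.
Variables (n : nat) (s : 'I_n -> word).
Hypothesis code_s : complete_prefix_code n s.

Lemma code_index : exists J : cantor -> 'I_n, forall x, is_prefix (s (J x)) x.
Proof.
apply: (choice (fun x j => is_prefix (s j) x)) => x.
by have [j [pre_j _]] := code_s x; exists j.
Qed.

Lemma code_index_unique i j x : is_prefix (s i) x -> is_prefix (s j) x -> i = j.
Proof.
by move=> pre_i pre_j; have [k [_ uniq_k]] := code_s x; rewrite -(uniq_k i) ?(uniq_k j).
Qed.

End PrefixCode.

Section EndomorphismKernel.
Variables (L : Type) (inL : L -> Prop) (beta : L -> L).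

Local Notation inKb := (inK inL (omega_of beta)).

Definition transports (v : cantor -> cantor) (a b : word -> L) : Prop :=
  exists n (t s : 'I_n -> word) (sigma : 'I_n -> 'I_n),
    V_rep v n t s sigma /\ forall i u, b (s (sigma i) ++ u) = a (t i ++ u).

Lemma inK_iter a : inKb a -> forall k u, a u = iter k beta (a (u ++ nseq k false)).
Proof.
move=> [_ a_rec]; elim=> [|k IHk] u; first by rewrite cats0.
by rewrite iterS -cat_rcons -IHk [LHS]a_rec.
Qed.

Lemma transports_iter v a b : inKb b -> transports v a b ->
  forall w, exists k0, forall k, k0 <= k -> exists p,
    b w = iter k beta (a p) /\ forall y, v (wcat p y) = wcat (w ++ nseq k false) y.
Proof.
move=> Kb [n [t [s [sigma [[_ [code_s [[g sigmaK gK] vE]]] bE]]]]] w.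
have [j [pre_j _]] := code_s (wcat w zeros).
exists (size (s j)) => k lejk; have wE := cat_nseq_prefix pre_j lejk.
exists (t (g j) ++ drop (size (s j)) (w ++ nseq k false)); split.
  by rewrite (inK_iter Kb k w) {1}wE -{1}[j]gK bE.
by move=> y; rewrite wcat_cat vE gK -wcat_cat -wE.
Qed.

Lemma transports_unique v a b b' : injective v -> inKb b -> inKb b' ->
  transports v a b -> transports v a b' -> b = b'.
Proof.
move=> v_inj Kb Kb' tr_b tr_b'; apply: functional_extensionality => w.
have [k0 itb] := transports_iter Kb tr_b w.
have [k1 itb'] := transports_iter Kb' tr_b' w.
have [p [-> vp]] := itb (maxn k0 k1) (leq_maxl _ _).
have [p' [-> vp']] := itb' (maxn k0 k1) (leq_maxr _ _).
suff -> : p = p' by [].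
(* [v] is injective, so [p] is determined by [w 0^k]. *)
by apply: wcat_injl => y; apply: v_inj; rewrite vp vp'.
Qed.

Hypothesis beta_closed : forall x, inL x -> inL (beta x).

Lemma iter_closed k x : inL x -> inL (iter k beta x).
Proof. by elim: k => //= k IHk /IHk; apply: beta_closed. Qed.

Lemma transports_exists v a : inV v -> inKb a -> exists b, inKb b /\ transports v a b.
Proof.
move=> [_ [n [t [s [sigma rep]]]]] Ka.
have [_ [code_s [[g sigmaK gK] _]]] := rep.
have [J pre_J] := code_index code_s.
pose j w := J (wcat w zeros); pose k w := size (s (j w)).
pose b w := iter (k w) beta (a (t (g (j w)) ++ drop (k w) (w ++ nseq (k w) false))).
exists b; split; [split|].
- by move=> w; apply: iter_closed; apply: Ka.1.
- move=> u; rewrite /omega_of /b /k /j wcat_rcons_zeros -/(j u) -/(k u).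
  have lek : k u <= size (u ++ nseq (k u) false) by rewrite size_cat size_nseq leq_addl.
  rewrite cat_rcons -[false :: _]/(nseq (k u).+1 false) cat_nseqS drop_rcons //.
  by rewrite -rcons_cat -iterS iterSr; congr iter; apply: Ka.2.
- exists n, t, s, sigma; split => // i u; rewrite /b /k.
  have -> : j (s (sigma i) ++ u) = sigma i.
    apply: (code_index_unique code_s (pre_J _)); exact: is_prefix_wcat.
  by rewrite sigmaK -catA drop_size_cat // catA -(inK_iter Ka).
Qed.

Lemma piV_spec v a : inV v -> inKb a ->
  inKb (piV inL (omega_of beta) v a) /\ transports v a (piV inL (omega_of beta) v a).
Proof.
move=> Vv Ka; have [b Kb_tr] := transports_exists Vv Ka.
by apply: (epsilon_spec (inhabits a) (fun b => inKb b /\ transports v a b)); exists b.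
Qed.

Lemma piV_char v a c : inV v -> inKb a -> inKb c -> transports v a c ->
  piV inL (omega_of beta) v a = c.
Proof.
move=> Vv Ka Kc tr_c; have [Kpi tr_pi] := piV_spec Vv Ka.
have [[w [vK _]] _] := Vv.
exact: transports_unique (can_inj vK) Kpi Kc tr_pi tr_c.
Qed.

End EndomorphismKernel.

Section InverseLimitKernel.
Variables (T : Type) (alpha : T -> T).

Local Notation inKa := (inK (fun _ : T => True) (omega_of alpha)).
Local Notation inKlim := (inK (in_lim alpha) (omega_of (lim_map alpha))).

Definition lim_lift (a : word -> T) : word -> nat -> T :=
  fun u n => a (u ++ nseq n false).

Definition lim_head (b : word -> nat -> T) : word -> T := fun u => b u 0.

Lemma in_lim_map g : in_lim alpha g -> in_lim alpha (lim_map alpha g).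
Proof. by move=> g_lim n; rewrite /lim_map -g_lim. Qed.

Lemma lim_lift_inK a : inKa a -> inKlim (lim_lift a).
Proof.
move=> Ka; have a_step u n : lim_lift a u n = alpha (lim_lift a u n.+1).
  by rewrite /lim_lift (inK_iter Ka 1) cats1 -cat_nseqS.
split=> [u n | u]; first exact: a_step.
apply: functional_extensionality => n.
by rewrite a_step /omega_of /lim_map /lim_lift cat_rcons.
Qed.

Lemma lim_head_inK b : inKlim b -> inKa (lim_head b).
Proof. by move=> [_ b_rec]; split=> // u; rewrite /lim_head b_rec. Qed.

Lemma lim_liftK : cancel lim_lift lim_head.
Proof.
by move=> a; apply: functional_extensionality => u; rewrite /lim_head /lim_lift cats0.
Qed.

Lemma lim_headK b : inKlim b -> lim_lift (lim_head b) = b.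
Proof.
move=> [b_lim b_rec]; apply: functional_extensionality => u.
apply: functional_extensionality => n; elim: n u => [|n IHn] u.
  by rewrite /lim_lift cats0.
have shift : b u n.+1 = b (rcons u false) n by rewrite b_rec /omega_of /lim_map -b_lim.
by rewrite shift -IHn /lim_lift cat_rcons.
Qed.

Lemma lim_lift_transports v a b :
  transports v a b -> transports v (lim_lift a) (lim_lift b).
Proof.
move=> [n [t [s [sigma [rep bE]]]]]; exists n, t, s, sigma; split=> // i u.
by apply: functional_extensionality => m; rewrite /lim_lift -!catA bE.
Qed.

Lemma lim_lift_piV v a : inV v -> inKa a ->
  lim_lift (piV (fun _ => True) (omega_of alpha) v a) =
  piV (in_lim alpha) (omega_of (lim_map alpha)) v (lim_lift a).
Proof.
move=> Vv Ka; have [Kpi tr_pi] := piV_spec (fun _ _ => I) Vv Ka.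
symmetry; apply: piV_char (lim_lift_transports tr_pi) => //.
- exact: in_lim_map.
- exact: lim_lift_inK.
- exact: lim_lift_inK.
Qed.

End InverseLimitKernel.

Theorem mainTheorem3 (T : Type) (mul : T -> T -> T) (one : T) (inv : T -> T)
  (HT : is_group_law mul one inv) (alpha : T -> T) (Halpha : is_endo mul alpha) :
  group_iso
    (inG (fun _ : T => True) (omega_of alpha))
    (mulG (fun _ : T => True) mul (omega_of alpha))
    (inG (in_lim alpha) (omega_of (lim_map alpha)))
    (mulG (in_lim alpha) (lim_mul mul) (omega_of (lim_map alpha))).
Proof.
exists (fun x : rawG T => (lim_lift x.1, x.2)); split; [|split; [|split]].
- by move=> [a v] [Ka Vv]; split=> //; apply: lim_lift_inK.
- by move=> [a v] [a' v'] _ _ [/(can_inj (@lim_liftK T)) -> ->].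
- move=> [b v] [Kb Vv]; exists (lim_head b, v); first by split=> //; apply: lim_head_inK.
  by rewrite /= (lim_headK Kb).
- by move=> [a v] [b w] [_ Vv] [Kb _]; rewrite /mulG /= -lim_lift_piV.
Qed.
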